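(* For every $\theta\in\mathbb R$, the operator $\widetilde U_\theta$ maps $\widetilde{\mathcal H}$ into itself and is unitary on $\widetilde{\mathcal H}$: $\widetilde U_\theta\widetilde U_\theta^*=\widetilde U_\theta^*\widetilde U_\theta=\mathbb 1$.
   Context: Let $\Bbbk\geq3$ and $\mathcal H=(\mathbb C^2)^{\otimes\Bbbk}$ with orthonormal basis $|\mathrm x\rangle=|\mathrm x_1\rangle\otimes\cdots\otimes|\mathrm x_\Bbbk\rangle$, $\mathrm x_i\in\{0,1\}$. For $j\in\{0,1\}$, $P_{[\![j]\!]}$ is the orthogonal projection onto the span of the $|\mathrm x\rangle$ with $\mathrm x_1=j$. Let $\mathbf U$ be a $2\times2$ unitary matrix all of whose entries have modulus $2^{-1/2}$, and define the unitary $\bar U$ on $\mathcal H$ by $\bar U|\mathrm x\rangle=|\mathrm x_2\rangle\otimes\cdots\otimes|\mathrm x_\Bbbk\rangle\otimes\mathbf U|\mathrm x_1\rangle$. Let $\sigma$ be the unitary exchanging the last two tensor factors: $\sigma(|\mathrm x_1\rangle\otimes\cdots\otimes|\mathrm x_{\Bbbk-1}\rangle\otimes|\mathrm x_\Bbbk\rangle)=|\mathrm x_1\rangle\otimes\cdots\otimes|\mathrm x_\Bbbk\rangle\otimes|\mathrm x_{\Bbbk-1}\rangle$. Put $P'_{[\![j]\!]}=\bar UP_{[\![j]\!]}\bar U^*$. The tower Hilbert space is $\widetilde{\mathcal H}=\mathcal H\oplus P'_{[\![1]\!]}\mathcal H$ with scalar product $\langle(\phi_0,\phi_1),(\phi_0',\phi_1')\rangle=\langle\phi_0,\phi_0'\rangle+\langle\phi_1,\phi_1'\rangle$,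 and for $\theta\in\mathbb R$, $\widetilde U_\theta(\phi_0,\phi_1)=\big(\sigma\bar U P'_{[\![1]\!]}\phi_1+\bar UP_{[\![0]\!]}\phi_0,\ e^{i\theta}\bar UP_{[\![1]\!]}\phi_0\big)$. *)

From mathcomp Require Import all_boot all_algebra.
From mathcomp Require Import reals trigo.
From mathcomp Require Export complex.
Set Implicit Arguments. Unset Strict Implicit. Unset Printing Implicit Defensive.
Import GRing.Theory Num.Theory.
Local Open Scope ring_scope.
Local Open Scope complex_scope.

Section Ops.
Variable C : nzRingType.
Variable T : finType.

(* Linear operators on C^T are given by their kernels (matrix entries
   <y| A |x> = A y x) in the orthonormal basis indexed by T. *)
Definition op := T -> T -> C.
Definition vect := T -> C.

Definition opmul (A B : op) : op := fun y x => \sum_(z : T) A y z * B z x.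
Definition opapp (A : op) (v : vect) : vect := fun y => \sum_(x : T) A y x * v x.
Definition opid : op := fun y x => if y == x then 1 else 0.
End Ops.

Definition opadj (R : rcfType) (T : finType) (A : op R[i] T) : op R[i] T :=
  fun y x => (A x y)^*.

(* basis |x> = |x_1> (x) ... (x) |x_k> of (C^2)^(x)k, x_{j+1} = nth false x j *)
Definition basis (k : nat) := k.-tuple bool.
Definition bit (x : seq bool) (j : nat) : bool := nth false x j.
Definition b2o (b : bool) : 'I_2 := if b then ord_max else ord0.

Section Tower.
Variables (R : realType) (k : nat) (U : 'M[R[i]]_2) (theta : R).
Local Notation B := (basis k).
Local Notation C := (R[i]).

Definition Pj (j : bool) : op C B :=
  fun y x => if (y == x) && (bit x 0 == j) then 1 else 0.

(* Ubar |x> = |x_2> (x) ... (x) |x_k> (x) U |x_1>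
   = sum_b U_{b,x_1} |x_2 ... x_k b> *)
Definition Ubar : op C B :=
  fun y x =>
    if [forall j : 'I_k, (j.+1 < k)%N ==> (bit y j == bit x j.+1)]
    then U (b2o (bit y k.-1)) (b2o (bit x 0)) else 0.

Definition swp (j : nat) : nat :=
  if j == k.-2 then k.-1 else if j == k.-1 then k.-2 else j.
Definition sigma : op C B :=
  fun y x => if [forall j : 'I_k, bit y j == bit x (swp j)] then 1 else 0.

Definition Pj' (j : bool) : op C B := opmul (opmul Ubar (Pj j)) (opadj Ubar).

Definition expi : C := cos theta +i* sin theta.

(* The tower space H~ = H (+) P'_[[1]] H is realized as the subspace of
   H (+) H = C^(B + B) (first component indexed by inl, second by inr)
   which is the range of the orthogonal projection Qt = 1 (+) P'_[[1]];
   its scalar product is the restriction of the standard one. *)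
Definition Qt : op C (B + B)%type :=
  fun y x => match y, x with
             | inl y, inl x => @opid C B y x
             | inr y, inr x => Pj' true y x
             | _, _ => 0
             end.

Definition in_tower (v : vect C (B + B)%type) : Prop := opapp Qt v = v.

(* U~_theta (phi0, phi1) =
   (sigma Ubar P'_[[1]] phi1 + Ubar P_[[0]] phi0, e^{i theta} Ubar P_[[1]] phi0) *)
Definition Utilde : op C (B + B)%type :=
  fun y x => match y, x with
             | inl y, inl x => opmul Ubar (Pj false) y x
             | inl y, inr x => opmul (opmul sigma Ubar) (Pj' true) y x
             | inr y, inl x => expi * opmul Ubar (Pj true) y x
             | inr y, inr x => 0
             end.
End Tower.

(* Ubar and sigma are unitary on H (Ubar because U is), so P'_[[1]] = Ubar P_[[1]] Ubar^*
   is an orthogonal projection, and U~_theta maps everything into H~ because its second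
   component has the form Ubar P_[[1]] phi.  The key point is that sigma Ubar commutes
   with P'_[[1]]; with it, on H~ the blocks of U~ U~^* and U~^* U~ collapse to
   P_[[0]] + P_[[1]] = 1 and e^{-i theta} e^{i theta} = 1. *)

From mathcomp Require Import all_boot all_algebra.
From mathcomp Require Import reals trigo complex boolp functions.
From mathcomp Require Import zify ring.
Import GRing.Theory Num.Theory.
Local Open Scope ring_scope.
Local Open Scope complex_scope.
Set Implicit Arguments. Unset Strict Implicit. Unset Printing Implicit Defensive.

Section OperatorAlgebra.
Variables (C : nzRingType) (T : finType).
Implicit Types (A B : op C T) (v w : vect C T).

Lemma opappM A B v : opapp (opmul A B) v = opapp A (opapp B v).
Proof.
apply/funext => y; rewrite /opapp /opmul.
under eq_bigr do rewrite big_distrl.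
rewrite exchange_big; apply: eq_bigr => z _; rewrite big_distrr.
by apply: eq_bigr => x _; exact/esym/mulrA.
Qed.

Lemma opappD A v w : opapp A (v + w) = opapp A v + opapp A w.
Proof.
apply/funext => y; rewrite !fctE /opapp -big_split.
by apply: eq_bigr => x _; rewrite mulrDr.
Qed.

Lemma opapp0 A : opapp A 0 = 0.
Proof. by apply/funext => y; rewrite /opapp big1 // => x _; exact: mulr0. Qed.

Lemma opapp0l v : opapp 0 v = 0.
Proof. by apply/funext => y; rewrite /opapp big1 // => x _; rewrite mul0r. Qed.

Lemma opapp_id v : opapp (@opid C T) v = v.
Proof.
apply/funext => y; rewrite /opapp (bigD1 y) //= /opid eqxx mul1r big1 ?addr0 //.
by move=> x /negbTE; rewrite eq_sym => ->; rewrite mul0r.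
Qed.

Lemma sum_delta (I : finType) (t : I -> T) (c : I -> C) v :
  \sum_x (\sum_a (if x == t a then c a else 0)) * v x = \sum_a c a * v (t a).
Proof.
under eq_bigr do rewrite big_distrl.
rewrite exchange_big; apply: eq_bigr => a _.
rewrite (bigD1 (t a)) //= eqxx big1 ?addr0 // => x /negbTE ->.
by rewrite mul0r.
Qed.

End OperatorAlgebra.

Section ComplexOperators.
Variables (R : rcfType) (T : finType).
Implicit Types (A B : op R[i] T) (v : vect R[i] T).

Lemma opappZ A c v : opapp A (c *: v) = c *: opapp A v.
Proof.
apply/funext => y; rewrite !fctE /opapp scaler_sumr.
by apply: eq_bigr => x _; exact: mulrCA.
Qed.

Lemma opappZl c A v : opapp (c *: A) v = c *: opapp A v.
Proof.
apply/funext => y; rewrite !fctE /opapp scaler_sumr.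
by apply: eq_bigr => x _; rewrite scalrfctE; exact/esym/mulrA.
Qed.

Lemma opadjM A B : opadj (opmul A B) = opmul (opadj B) (opadj A).
Proof.
apply/funext => y; apply/funext => x; rewrite /opadj /opmul rmorph_sum.
by apply: eq_bigr => z _; rewrite rmorphM mulrC.
Qed.

Lemma opadjK A : opadj (opadj A) = A.
Proof. by apply/funext => y; apply/funext => x; rewrite /opadj conjcK. Qed.

Lemma opadjZ c A : opadj (c *: A) = conjc c *: opadj A.
Proof. by apply/funext => y; apply/funext => x; rewrite /opadj /= rmorphM. Qed.

Lemma opadj0 : opadj (0 : op R[i] T) = 0.
Proof. by apply/funext => y; apply/funext => x; exact: conjc0. Qed.

End ComplexOperators.

Section Blocks.
Variables (C : nzRingType) (T : finType).

Definition opblock (A11 A12 A21 A22 : op C T) : op C (T + T)%type :=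
  fun y x => match y, x with
             | inl y, inl x => A11 y x
             | inl y, inr x => A12 y x
             | inr y, inl x => A21 y x
             | inr y, inr x => A22 y x
             end.

Definition vpair (a b : vect C T) : vect C (T + T)%type :=
  fun z => match z with inl x => a x | inr x => b x end.

Lemma vpair_eta (v : vect C (T + T)%type) : vpair (v \o inl) (v \o inr) = v.
Proof. by apply/funext => -[]. Qed.

Lemma opapp_block A11 A12 A21 A22 a b :
  opapp (opblock A11 A12 A21 A22) (vpair a b) =
  vpair (opapp A11 a + opapp A12 b) (opapp A21 a + opapp A22 b).
Proof. by apply/funext => -[y|y]; rewrite /opapp big_sumType. Qed.

End Blocks.

Lemma opadj_block (R : rcfType) (T : finType) (A11 A12 A21 A22 : op R[i] T) :
  opadj (opblock A11 A12 A21 A22) =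
  opblock (opadj A11) (opadj A21) (opadj A12) (opadj A22).
Proof. by apply/funext => -[y|y]; apply/funext => -[x|x]. Qed.

Section BitStrings.
Variable k : nat.
Hypothesis k_ge3 : (3 <= k)%N.
Local Notation B := (basis k).

Let k_gt0 : (0 < k)%N. Proof. lia. Qed.
Let k1_lt : (k.-1 < k)%N. Proof. lia. Qed.
Let k2_lt : (k.-2 < k)%N. Proof. lia. Qed.

Definition mkbasis (f : nat -> bool) : B := [tuple f (nat_of_ord j) | j < k].

Lemma bit_mkbasis f j : (j < k)%N -> bit (mkbasis f) j = f j.
Proof. by move=> hj; rewrite /bit -(tnth_nth false _ (Ordinal hj)) tnth_mktuple. Qed.

Lemma eq_basis (x y : B) : (forall j, (j < k)%N -> bit x j = bit y j) -> x = y.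
Proof. by move=> h; apply: eq_from_tnth => i; rewrite !(tnth_nth false); exact: h. Qed.

Definition push_back (x : B) b := mkbasis (fun j => if j == k.-1 then b else bit x j.+1).
Definition push_front (y : B) a := mkbasis (fun j => if j == 0%N then a else bit y j.-1).
Definition set_last (y : B) b := mkbasis (fun j => if j == k.-1 then b else bit y j).
Definition set_first (y : B) a := mkbasis (fun j => if j == 0%N then a else bit y j).
Definition swap_last (x : B) := mkbasis (fun j => bit x (swp k j)).

Definition shifted (y x : B) :=
  [forall j : 'I_k, (j.+1 < k)%N ==> (bit y j == bit x j.+1)].

Lemma eq_push_front (x y : B) a : (x == push_front y a) = shifted y x && (bit x 0 == a).
Proof.
apply/eqP/andP => [->|[/forallP hc /eqP h0]].
  split; last by rewrite bit_mkbasis.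
  by apply/forallP => j; apply/implyP => hj; rewrite bit_mkbasis.
apply: eq_basis => -[|j] hj; rewrite bit_mkbasis //=.
by have /implyP /(_ hj) /eqP -> := hc (Ordinal (ltnW hj)).
Qed.

Lemma eq_push_back (x y : B) b : (x == push_back y b) = shifted x y && (bit x k.-1 == b).
Proof.
apply/eqP/andP => [->|[/forallP hc /eqP hl]].
  split; last by rewrite bit_mkbasis ?eqxx.
  apply/forallP => j; apply/implyP => hj.
  by rewrite bit_mkbasis ?ifF //; apply/eqP; lia.
apply: eq_basis => j hj; rewrite bit_mkbasis //.
case: ifP => [/eqP -> //|/eqP hne].
have hj' : (j.+1 < k)%N by lia.
by have /implyP /(_ hj') /eqP -> := hc (Ordinal hj).
Qed.

Lemma swp_lt j : (j < k)%N -> (swp k j < k)%N.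
Proof. by move=> ?; rewrite /swp; repeat case: ifP => /eqP ?; lia. Qed.

Lemma swpK j : (j < k)%N -> swp k (swp k j) = j.
Proof.
move=> ?; rewrite /swp.
case: (j =P k.-2) => [->|?]; last case: (j =P k.-1) => [->|?];
  by repeat case: ifP => /eqP ?; lia.
Qed.

Lemma swap_lastK : involutive swap_last.
Proof. by move=> x; apply: eq_basis => j hj; rewrite !bit_mkbasis ?swp_lt ?swpK. Qed.

Lemma bit_push_front0 y a : bit (push_front y a) 0 = a.
Proof. by rewrite bit_mkbasis. Qed.

Lemma bit_push_back_last y b : bit (push_back y b) k.-1 = b.
Proof. by rewrite bit_mkbasis ?eqxx. Qed.

Lemma push_back_front y a b : push_back (push_front y a) b = set_last y b.
Proof.
apply: eq_basis => j hj; rewrite [LHS]bit_mkbasis // [RHS]bit_mkbasis //.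
by case: ifP => // /eqP hne; rewrite bit_mkbasis /=; lia.
Qed.

Lemma push_front_back y a b : push_front (push_back y b) a = set_first y a.
Proof.
apply: eq_basis => j hj; rewrite [LHS]bit_mkbasis // [RHS]bit_mkbasis //.
case: ifP => // /eqP hne; rewrite bit_mkbasis; last lia.
by case: ifP => /eqP h; [lia | rewrite prednK //; lia].
Qed.

Lemma set_last_id y : set_last y (bit y k.-1) = y.
Proof. by apply: eq_basis => j hj; rewrite bit_mkbasis //; case: ifP => // /eqP ->. Qed.

Lemma set_first_id y : set_first y (bit y 0) = y.
Proof. by apply: eq_basis => j hj; rewrite bit_mkbasis //; case: ifP => // /eqP ->. Qed.

Lemma bit_swap_last_last y : bit (swap_last y) k.-1 = bit y k.-2.
Proof. by rewrite bit_mkbasis // /swp ifF ?eqxx //; apply/eqP; lia. Qed.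

Lemma bit_push_front_swap_last y a : bit (push_front (swap_last y) a) k.-1 = bit y k.-1.
Proof.
rewrite bit_mkbasis // ifF; last by apply/eqP; lia.
by rewrite bit_mkbasis /swp ?eqxx.
Qed.

Lemma bit_swap_last_set_last y b : bit (swap_last (set_last y b)) k.-1 = bit y k.-2.
Proof. by rewrite bit_swap_last_last bit_mkbasis // ifF //; apply/eqP; lia. Qed.

Lemma set_last_push_front_swap y a b :
  set_last (push_front (swap_last y) a) b = push_front (swap_last (set_last y b)) a.
Proof.
apply: eq_basis => j hj; rewrite [LHS]bit_mkbasis // [RHS]bit_mkbasis //.
case: (j =P 0%N) => [->|h0]; first by rewrite ifF ?bit_push_front0 //; apply/eqP; lia.
case: ifP => /eqP hl.
  subst j; rewrite bit_mkbasis; last lia.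
  have -> : swp k k.-1.-1 = k.-1 by rewrite /swp ifT //; apply/eqP; lia.
  by rewrite bit_mkbasis // eqxx.
have hs : swp k j.-1 = j.-1 by rewrite /swp; repeat case: ifP => /eqP ?; lia.
rewrite bit_mkbasis // ifF; last by apply/eqP; lia.
rewrite !bit_mkbasis ?hs; try lia.
by rewrite ifF //; apply/eqP; lia.
Qed.

End BitStrings.

Lemma b2o_inj : injective b2o.
Proof. by do 2!case. Qed.

Lemma sum_ord2 (M : nmodType) (F : 'I_2 -> M) :
  \sum_(l < 2) F l = \sum_(a : bool) F (b2o a).
Proof.
rewrite big_bool !big_ord_recr big_ord0 /= add0r addrC.
by congr (F _ + F _); exact: val_inj.
Qed.

Lemma sum_bool_nat_eq (C : pzSemiRingType) c (f : bool -> C) :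
  \sum_a (c == a)%:R * f a = f c.
Proof. by rewrite big_bool; case: c; rewrite /= mul1r mul0r ?addr0 ?add0r. Qed.

Section Tower.
Variables (R : realType) (k : nat) (U : 'M[R[i]]_2).
Hypothesis k_ge3 : (3 <= k)%N.
Hypothesis U_unitary : U *m (map_mx conjc U)^T = 1%:M.
Local Notation B := (basis k).
Local Notation v_ := (vect R[i] B).
Local Notation Ub := (@Ubar R k U).
Local Notation P := (@Pj R k).
Local Notation sg := (@sigma R k).
Implicit Types (v : v_).

Lemma unitary_rows c b :
  \sum_(a : bool) U (b2o c) (b2o a) * conjc (U (b2o b) (b2o a)) = (c == b)%:R.
Proof.
have := congr1 (fun M : 'M_2 => M (b2o c) (b2o b)) U_unitary.
rewrite -(inj_eq b2o_inj) !mxE sum_ord2 => <-.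
by apply: eq_bigr => a _; rewrite !mxE.
Qed.

Lemma unitary_cols c b :
  \sum_(a : bool) conjc (U (b2o a) (b2o c)) * U (b2o a) (b2o b) = (c == b)%:R.
Proof.
have := congr1 (fun M : 'M_2 => M (b2o c) (b2o b)) (mulmx1C U_unitary).
rewrite -(inj_eq b2o_inj) !mxE sum_ord2 => <-.
by apply: eq_bigr => a _; rewrite !mxE.
Qed.

Lemma Ubar_app v y :
  opapp Ub v y = \sum_a U (b2o (bit y k.-1)) (b2o a) * v (push_front y a).
Proof.
rewrite /opapp -(sum_delta (push_front y)); apply: eq_bigr => x _; congr (_ * _).
rewrite /Ubar big_bool !eq_push_front // -/(shifted y x).
by case: (shifted y x) (bit x 0) => -[] /=; rewrite ?addr0 ?add0r.
Qed.

Lemma Ubar_adj_app v y :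
  opapp (opadj Ub) v y = \sum_b conjc (U (b2o b) (b2o (bit y 0))) * v (push_back y b).
Proof.
rewrite /opapp -(sum_delta (push_back y)); apply: eq_bigr => x _; congr (_ * _).
rewrite /opadj /Ubar big_bool !eq_push_back // -/(shifted x y).
rewrite fun_if conjc0.
by case: (shifted x y) (bit x k.-1) => -[] /=; rewrite ?addr0 ?add0r.
Qed.

Lemma Pj_app b v y : opapp (P b) v y = if bit y 0 == b then v y else 0.
Proof.
rewrite /opapp (bigD1 y) // [LHS]/= big1 ?addr0 => [|x /negbTE hx]; last first.
  by rewrite /Pj eq_sym hx mul0r.
by rewrite /Pj eqxx andTb; case: ifP; rewrite ?mul1r ?mul0r.
Qed.

Lemma Pj_adj b : opadj (P b) = P b.
Proof.
apply/funext => y; apply/funext => x; rewrite /opadj /Pj.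
case: (x =P y) => [->|/eqP ne]; first by rewrite eqxx; case: ifP; rewrite ?conjc1 ?conjc0.
by rewrite [y == x]eq_sym (negbTE ne) !andFb conjc0.
Qed.

Lemma Pj_idem b v : opapp (P b) (opapp (P b) v) = opapp (P b) v.
Proof. by apply/funext => y; rewrite !Pj_app; case: (_ == b). Qed.

Lemma Pj_orth b v : opapp (P b) (opapp (P (~~ b)) v) = 0.
Proof. by apply/funext => y; rewrite !Pj_app; case: b (bit y 0) => -[]. Qed.

Lemma Pj_sum v : opapp (P false) v + opapp (P true) v = v.
Proof. by apply/funext => y; rewrite !fctE !Pj_app; case: (bit y 0); rewrite ?addr0 ?add0r. Qed.

Lemma sigmaE y x : sg y x = if y == swap_last x then 1 else 0.
Proof.
rewrite /sigma; congr (if _ then _ else _); apply/forallP/eqP => [h|-> j].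
  by apply: eq_basis => j hj; rewrite bit_mkbasis //; apply/eqP/(h (Ordinal hj)).
by rewrite bit_mkbasis.
Qed.

Lemma sigma_app v y : opapp sg v y = v (swap_last y).
Proof.
rewrite /opapp (bigD1 (swap_last y)) //= sigmaE swap_lastK // eqxx mul1r.
rewrite big1 ?addr0 // => x hx; rewrite sigmaE ifF ?mul0r //.
by apply: contraNF hx => /eqP ->; rewrite swap_lastK.
Qed.

Lemma sigma_adj_app v y : opapp (opadj sg) v y = v (swap_last y).
Proof.
rewrite /opapp /opadj (bigD1 (swap_last y)) //= sigmaE eqxx conjc1 mul1r.
by rewrite big1 ?addr0 // => x /negbTE hx; rewrite sigmaE hx conjc0 mul0r.
Qed.

Lemma adj_sigmaK v : opapp (opadj sg) (opapp sg v) = v.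
Proof. by apply/funext => y; rewrite sigma_adj_app sigma_app swap_lastK. Qed.

Lemma sigma_adjK v : opapp sg (opapp (opadj sg) v) = v.
Proof. by apply/funext => y; rewrite sigma_app sigma_adj_app swap_lastK. Qed.

Lemma adj_UbarK v : opapp (opadj Ub) (opapp Ub v) = v.
Proof.
apply/funext => y; rewrite Ubar_adj_app.
under eq_bigr do rewrite Ubar_app bit_push_back_last // big_distrr.
rewrite exchange_big /=.
under eq_bigr do (under eq_bigr do rewrite mulrA push_front_back //;
                  rewrite -big_distrl unitary_cols /=).
by rewrite sum_bool_nat_eq set_first_id.
Qed.

Lemma Ubar_adjK v : opapp Ub (opapp (opadj Ub) v) = v.
Proof.
apply/funext => y; rewrite Ubar_app.
under eq_bigr do rewrite Ubar_adj_app bit_push_front0 // big_distrr.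
rewrite exchange_big /=.
under eq_bigr do (under eq_bigr do rewrite mulrA push_back_front //;
                  rewrite -big_distrl unitary_rows /=).
by rewrite sum_bool_nat_eq set_last_id.
Qed.

Local Notation P1' := (@Pj' R k U true).

Lemma Pj'_app v : opapp P1' v = opapp Ub (opapp (P true) (opapp (opadj Ub) v)).
Proof. by rewrite /Pj' !opappM. Qed.

Lemma Pj'_Ubar v : opapp P1' (opapp Ub v) = opapp Ub (opapp (P true) v).
Proof. by rewrite Pj'_app adj_UbarK. Qed.

Lemma adj_Ubar_Pj' v : opapp (opadj Ub) (opapp P1' v) = opapp (P true) (opapp (opadj Ub) v).
Proof. by rewrite Pj'_app adj_UbarK. Qed.

Lemma Pj'_idem v : opapp P1' (opapp P1' v) = opapp P1' v.
Proof. by rewrite [in LHS]Pj'_app adj_Ubar_Pj' Pj_idem -Pj'_app. Qed.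

Lemma Pj'_sum v : opapp Ub (opapp (P false) (opapp (opadj Ub) v)) + opapp P1' v = v.
Proof. by rewrite Pj'_app -opappD Pj_sum Ubar_adjK. Qed.

(* P'_[[1]] = 1 (x) ... (x) 1 (x) U P_1 U^* acts on the last factor only. *)
Lemma Pj'E v y : opapp P1' v y =
  U (b2o (bit y k.-1)) (b2o true) * \sum_b conjc (U (b2o b) (b2o true)) * v (set_last y b).
Proof.
rewrite Pj'_app Ubar_app big_bool !Pj_app !bit_push_front0 // eqxx /= mulr0 addr0.
rewrite Ubar_adj_app bit_push_front0 //; congr (_ * _); apply: eq_bigr => b _.
by rewrite push_back_front.
Qed.

(* sigma Ubar sends the last tensor factor back to the last place (this needs k >= 3). *)
Lemma sigma_Ubar_Pj' v :
  opapp sg (opapp Ub (opapp P1' v)) = opapp P1' (opapp sg (opapp Ub v)).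
Proof.
apply/funext => y; rewrite sigma_app Ubar_app Pj'E !big_bool !Pj'E !sigma_app.
rewrite !Ubar_app !big_bool !bit_push_front_swap_last // !bit_swap_last_set_last //.
by rewrite !bit_swap_last_last // !set_last_push_front_swap // /=; ring.
Qed.

Lemma Pj'_adj_sigma_Ubar v :
  opapp P1' (opapp (opadj Ub) (opapp (opadj sg) v)) =
  opapp (opadj Ub) (opapp (opadj sg) (opapp P1' v)).
Proof.
rewrite -{2}[v]sigma_adjK -{2}[opapp (opadj sg) v]Ubar_adjK -sigma_Ubar_Pj'.
by rewrite adj_sigmaK adj_UbarK.
Qed.

Variable theta : R.
Local Notation e := (expi theta).
Local Notation Ut := (@Utilde R k U theta).

Lemma conj_expi_mul : conjc e * e = 1.
Proof.
apply/eqP; rewrite eq_complex /= !mulNr opprK -!expr2 cos2Dsin2 eqxx /=.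
by apply/eqP; ring.
Qed.

Lemma Utilde_blockE :
  Ut = opblock (opmul Ub (P false)) (opmul (opmul sg Ub) P1') (e *: opmul Ub (P true)) 0.
Proof. by apply/funext => -[y|y]; apply/funext => -[x|x]. Qed.

Lemma Utilde_app a b : opapp Ut (vpair a b) =
  vpair (opapp Ub (opapp (P false) a) + opapp sg (opapp Ub (opapp P1' b)))
        (e *: opapp Ub (opapp (P true) a)).
Proof.
by rewrite Utilde_blockE opapp_block opapp0l addr0 opappZl !opappM.
Qed.

Lemma Utilde_adj_app a b : opapp (opadj Ut) (vpair a b) =
  vpair (opapp (P false) (opapp (opadj Ub) a) +
         conjc e *: opapp (P true) (opapp (opadj Ub) b))
        (opapp P1' (opapp (opadj Ub) (opapp (opadj sg) a))).
Proof.
rewrite Utilde_blockE opadj_block opapp_block opadj0 opapp0l addr0 opadjZ opappZl.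
by rewrite !opadjM !opappM !Pj_adj opadjK.
Qed.

Lemma Qt_app a b : opapp (@Qt R k U) (vpair a b) = vpair a (opapp P1' b).
Proof.
have -> : @Qt R k U = opblock (@opid _ B) 0 0 P1'.
  by apply/funext => -[y|y]; apply/funext => -[x|x].
by rewrite opapp_block !opapp0l addr0 add0r opapp_id.
Qed.

Lemma in_towerE u : in_tower U u <-> opapp P1' (u \o inr) = u \o inr.
Proof.
rewrite /in_tower -[in opapp _ u](vpair_eta u) Qt_app.
by split => [/(congr1 (fun f => f \o inr)) // | ->]; rewrite vpair_eta.
Qed.

Lemma Utilde_in_tower u : in_tower U (opapp Ut u).
Proof.
by apply/in_towerE; rewrite -(vpair_eta u) Utilde_app /= opappZ Pj'_Ubar Pj_idem.
Qed.

Lemma Utilde_Utilde_adj a b : opapp P1' b = b ->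
  opapp Ut (opapp (@Qt R k U) (opapp (opadj Ut) (vpair a b))) = vpair a b.
Proof.
move=> Pb; rewrite Utilde_adj_app Qt_app Utilde_app; congr vpair.
  rewrite !Pj'_idem Pj'_adj_sigma_Ubar Ubar_adjK sigma_adjK.
  by rewrite opappD opappZ Pj_idem Pj_orth scaler0 addr0 Pj'_sum.
rewrite !(opappD, opappZ) Pj_orth Pj_idem opapp0 add0r scalerA mulrC conj_expi_mul.
by rewrite scale1r -Pj'_app.
Qed.

Lemma Utilde_adj_Utilde a b : opapp P1' b = b ->
  opapp (@Qt R k U) (opapp (opadj Ut) (opapp Ut (vpair a b))) = vpair a b.
Proof.
move=> Pb; rewrite Utilde_app Utilde_adj_app Qt_app; congr vpair.
  rewrite !(opappD, opappZ) adj_UbarK Pj_idem sigma_Ubar_Pj' adj_Ubar_Pj' Pj_orth.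
  by rewrite scalerA conj_expi_mul scale1r adj_UbarK Pj_idem addr0 Pj_sum.
rewrite !opappD adj_sigmaK adj_UbarK !Pj'_idem Pb Pj'_adj_sigma_Ubar Pj'_Ubar.
by rewrite Pj_orth !opapp0 add0r.
Qed.

End Tower.

(* The modulus condition on the entries of U is not needed: unitarity of U suffices. *)
Theorem proposition6 (R : realType) (k : nat) (U : 'M[R[i]]_2) :
  (3 <= k)%N ->
  U *m (map_mx conjc U)^T = 1%:M ->
  (forall a b : 'I_2, `|U a b| = ((Num.sqrt (2 : R))^-1)%:C) ->
  forall theta : R,
    let Ut := @Utilde R k U theta in
    let Ut_star := opmul (@Qt R k U) (opadj Ut) in
    (forall v, @in_tower R k U v -> @in_tower R k U (opapp Ut v)) /\
    (forall v, @in_tower R k U v -> opapp Ut (opapp Ut_star v) = v) /\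
    (forall v, @in_tower R k U v -> opapp Ut_star (opapp Ut v) = v).
Proof.
move=> k_ge3 U_unitary _ theta Ut Ut_star.
split=> [v _|]; first exact: Utilde_in_tower.
split=> v /in_towerE Pv; rewrite opappM -(vpair_eta v).
  exact: Utilde_Utilde_adj.
exact: Utilde_adj_Utilde.
Qed.
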